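(* Let $T:\mathbb Z^n\to\mathbb Z^m$ be a linear map whose matrix in the standard bases has all entries in $\{0,1\}$. Let $Y$ be the image of $T$, $k$ the rank of $Y$, and $Z=\{z\in\mathbb Z^m:\exists q\in\mathbb Z\setminus\{0\}\text{ with }qz\in Y\}$. Then $Z/Y$ (which is isomorphic to the torsion subgroup of $\mathbb Z^m/Y$) has order at most $\left\lfloor 2^{-k}(k+1)^{(k+1)/2}\right\rfloor$. *)

From HB Require Import structures.
From mathcomp Require Import all_boot all_order all_algebra.
From mathcomp Require Import reals.
Set Implicit Arguments. Unset Strict Implicit. Unset Printing Implicit Defensive.
Import Order.TTheory GRing.Theory Num.Theory.
Local Open Scope ring_scope.

Definition inImage (m n : nat) (T : 'M[int]_(m, n)) (y : 'cV[int]_m) : Prop :=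
  exists x : 'cV[int]_n, y = T *m x.

Definition inSat (m n : nat) (T : 'M[int]_(m, n)) (z : 'cV[int]_m) : Prop :=
  exists q : int, q != 0 /\ inImage T (q *: z).

(* rank of Y = rank of the matrix T over Q *)
Definition rankY (m n : nat) (T : 'M[int]_(m, n)) : nat :=
  \rank (map_mx (fun x : int => (x%:~R : rat)) T).

Definition bound (R : realType) (k : nat) : int :=
  Num.floor ((2 : R) ^- k * Num.sqrt ((k.+1)%:R ^+ k.+1)).

From HB Require Import structures.
From mathcomp Require Import all_boot all_order all_algebra.
From mathcomp Require Import reals.
From mathcomp Require Import ring.
Import Order.TTheory GRing.Theory Num.Theory.
Local Open Scope ring_scope.

Set Implicit Arguments. Unset Strict Implicit. Unset Printing Implicit Defensive.

(* Pick [k = rank Y] rows and columns of [T] forming a nonsingular minor [A].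
   Since the chosen rows span the row space of [T] over [Q], an element of [Z]
   whose chosen coordinates lie in [A Z^k] already lies in [Y]; so restricting
   to the chosen coordinates embeds [Z/Y] into [Z^k / A Z^k], a group of order
   [|det A|] (Smith normal form).  Hadamard's inequality, applied to a sign
   matrix built from the 0/1 matrix [A], bounds [|det A|]. *)

Section Hadamard.
Variable F : realFieldType.

Definition row_dot m n (M : 'M[F]_(m, n)) i j := \sum_l M i l * M j l.

Lemma row_dotE m n (M : 'M[F]_(m, n)) i j : row_dot M i j = (M *m M^T) i j.
Proof. by rewrite !mxE; apply: eq_bigr => l _; rewrite mxE. Qed.

Lemma row_dotC m n (M : 'M[F]_(m, n)) i j : row_dot M i j = row_dot M j i.
Proof. by apply: eq_bigr => l _; rewrite mulrC. Qed.

Lemma row_dot_ge0 m n (M : 'M[F]_(m, n)) i : 0 <= row_dot M i i.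
Proof. by apply: sumr_ge0 => l _; rewrite -expr2 sqr_ge0. Qed.

Lemma row_dot_eq0 m n (M : 'M[F]_(m, n)) i :
  row_dot M i i = 0 -> forall l, M i l = 0.
Proof.
move=> /eqP; rewrite psumr_eq0 => [/allP M0 l|l _]; last by rewrite -expr2 sqr_ge0.
by have /implyP/(_ isT) := M0 l (mem_index_enum _); rewrite -expr2 sqrf_eq0 => /eqP.
Qed.

Lemma sum_sqr_orthD n (a b : 'I_n -> F) : \sum_l a l * b l = 0 ->
  \sum_l a l * a l <= \sum_l (a l + b l) * (a l + b l).
Proof.
move=> ab0; have -> : \sum_l (a l + b l) * (a l + b l) =
    \sum_l a l * a l + (2 * \sum_l a l * b l + \sum_l b l * b l).
  by rewrite mulr_sumr -!big_split; apply: eq_bigr => l _ /=; ring.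
by rewrite ab0 mulr0 add0r lerDl sumr_ge0 // => l _; rewrite -expr2 sqr_ge0.
Qed.

Lemma sum_comb_mul m n (Q : 'M[F]_(m, n)) (c : 'I_m -> F) (v : 'I_n -> F) :
  \sum_l (\sum_j c j * Q j l) * v l = \sum_j c j * \sum_l Q j l * v l.
Proof.
under eq_bigr do rewrite mulr_suml.
rewrite exchange_big; apply: eq_bigr => j _; rewrite mulr_sumr.
by apply: eq_bigr => l _; rewrite mulrA.
Qed.

Definition sub_row_comb n (Q : 'M[F]_n) k (c : 'I_n -> F) :=
  \matrix_(i, l) (Q i l - (i == k)%:R * \sum_j c j * Q j l).

Lemma sub_row_comb_id n (Q : 'M[F]_n) k c i :
  i != k -> sub_row_comb Q k c i =1 Q i.
Proof. by move=> /negPf ik l; rewrite mxE ik mul0r subr0. Qed.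

Lemma det_sub_row_comb n (Q : 'M[F]_n) (k : 'I_n) (c : 'I_n -> F) :
  (forall j : 'I_n, (k <= j)%N -> c j = 0) -> \det (sub_row_comb Q k c) = \det Q.
Proof.
move=> c_ge; pose U := \matrix_(i, j) ((i == j)%:R - (i == k)%:R * c j).
have -> : sub_row_comb Q k c = U *m Q.
  apply/matrixP => i l; rewrite !mxE.
  under [RHS]eq_bigr do rewrite mxE mulrBl -mulrA.
  rewrite sumrB -mulr_sumr; congr (_ - _).
  rewrite (bigD1 i) //= eqxx mul1r big1 ?addr0 // => j.
  by rewrite eq_sym => /negPf ->; rewrite mul0r.
have U_trig : is_trig_mx U.
  apply/is_trig_mxP => i j ij; rewrite mxE -val_eqE ltn_eqF //.
  case: eqP => [ik|_]; last by rewrite mul0r subrr.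
  by rewrite c_ge ?mulr0 ?subrr // -ik ltnW.
rewrite det_mulmx det_trig // big1 ?mul1r // => i _.
by rewrite mxE eqxx; case: eqP => [->|_];
  [rewrite c_ge // | rewrite mulr0n mul0r]; rewrite ?mulr0 subr0.
Qed.

Definition orthogonal_prefix n (Q : 'M[F]_n) t :=
  forall i j : 'I_n, (i < t)%N -> (j < t)%N -> i != j -> row_dot Q i j = 0.

Definition gs_coef n (Q : 'M[F]_n) (k j : 'I_n) :=
  if (j < k)%N then row_dot Q k j / row_dot Q j j else 0.

Lemma gram_schmidt_step n (Q : 'M[F]_n) (k : 'I_n) : orthogonal_prefix Q k ->
  let Q' := sub_row_comb Q k (gs_coef Q k) in
  [/\ \det Q' = \det Q, row_dot Q' k k <= row_dot Q k k &
      forall j : 'I_n, (j < k)%N -> row_dot Q' k j = 0].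
Proof.
move=> orthQ Q'; set c := gs_coef Q k; pose s l := \sum_j c j * Q j l.
have c_ge (j : 'I_n) : (k <= j)%N -> c j = 0 by rewrite /c /gs_coef ltnNge => ->.
have Q'k l : Q' k l = Q k l - s l by rewrite mxE eqxx mul1r.
have Q'i i : i != k -> Q' i =1 Q i by exact: sub_row_comb_id.
have dot_s (j : 'I_n) : (j < k)%N -> \sum_l s l * Q j l = c j * row_dot Q j j.
  move=> jk; rewrite sum_comb_mul (bigD1 j) //= [X in _ + X]big1 ?addr0 // => i ij.
  have [ik|/c_ge->] := ltnP i k; last by rewrite mul0r.
  by have := orthQ i j ik jk ij; rewrite /row_dot => ->; rewrite mulr0.
have orth' (j : 'I_n) : (j < k)%N -> row_dot Q' k j = 0.
  move=> jk; have jnk : j != k by rewrite neq_ltn jk.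
  rewrite /row_dot; under eq_bigr do rewrite Q'k (Q'i j jnk) mulrBl.
  rewrite sumrB dot_s // /c /gs_coef jk.
  have [Qjj0|Qjj_neq0] := eqVneq (row_dot Q j j) 0; last by rewrite divfK ?subrr.
  rewrite Qjj0 mulr0 subr0; apply: big1 => l _.
  by rewrite (row_dot_eq0 Qjj0) mulr0.
have perp : \sum_l Q' k l * s l = 0.
  under eq_bigr do rewrite mulrC.
  rewrite sum_comb_mul big1 // => j _.
  have [jk|/c_ge->] := ltnP j k; last by rewrite mul0r.
  transitivity (c j * row_dot Q' j k).
    by congr (_ * _); apply: eq_bigr => l _; rewrite (Q'i j) // neq_ltn jk.
  by rewrite row_dotC orth' ?mulr0.
split=> //; first exact: det_sub_row_comb.
have -> : row_dot Q k k = \sum_l (Q' k l + s l) * (Q' k l + s l).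
  by apply: eq_bigr => l _; rewrite Q'k subrK.
exact: sum_sqr_orthD.
Qed.

Lemma gram_schmidt n (M : 'M[F]_n) : exists Q : 'M[F]_n,
  [/\ \det Q = \det M, forall i, row_dot Q i i <= row_dot M i i & orthogonal_prefix Q n].
Proof.
suff /(_ n (leqnn n)) : forall t, (t <= n)%N -> exists Q : 'M[F]_n, [/\ \det Q = \det M,
  forall i, row_dot Q i i <= row_dot M i i & orthogonal_prefix Q t] by [].
elim=> [_|t IH tn]; first by exists M; split.
have [Q [dQ nQ oQ]] := IH (ltnW tn); pose k := Ordinal tn.
have [dQ' nQ' oQ'] := gram_schmidt_step (k := k) oQ.
set Q' := sub_row_comb _ _ _ in dQ' nQ' oQ'.
have Q'_id a b : a != k -> b != k -> row_dot Q' a b = row_dot Q a b.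
  by move=> ak bk; apply: eq_bigr => l _; rewrite !sub_row_comb_id.
exists Q'; split=> [|i|i j]; first by rewrite dQ'.
  have [->|ik] := eqVneq i k; first exact: le_trans nQ' (nQ k).
  by rewrite Q'_id.
have lt_neq (a : 'I_n) : (a < t)%N -> a != k by move=> a_lt; rewrite neq_ltn a_lt.
have eq_k (a : 'I_n) : (a == t :> nat) -> a = k by move=> /eqP a_t; apply: val_inj.
rewrite !ltnS (leq_eqVlt i) (leq_eqVlt j).
case/orP=> [/eq_k ->|it]; case/orP=> [/eq_k ->|jt]; first by rewrite eqxx.
- by move=> _; rewrite oQ'.
- by move=> _; rewrite row_dotC oQ'.
- by move=> ij; rewrite Q'_id ?lt_neq // oQ.
Qed.

Lemma hadamard n (M : 'M[F]_n) : \det M ^+ 2 <= \prod_i row_dot M i i.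
Proof.
have [Q [<- nQ oQ]] := gram_schmidt M.
have Qorth i j : i != j -> (Q *m Q^T) i j = 0 by move=> ij; rewrite -row_dotE oQ.
rewrite expr2 -{2}det_tr -det_mulmx det_trig; last first.
  by apply/is_trig_mxP => i j ij; rewrite Qorth // neq_ltn ij.
by apply: ler_prod => i _; rewrite -row_dotE row_dot_ge0 nQ.
Qed.

(* Bordering [A] with a row and a column of ones and replacing it by [1 - 2A]
   gives a [(k+1) x (k+1)] matrix of signs whose determinant is [(-2)^k det A]. *)
Lemma hadamard01 k (A : 'M[F]_k) : (forall i j, A i j = 0 \/ A i j = 1) ->
  (2 ^+ k * \det A) ^+ 2 <= (k.+1)%:R ^+ k.+1.
Proof.
move=> A01; pose B : 'M[F]_(1 + k) :=
  block_mx 1%:M (const_mx 1) (const_mx 1) (const_mx 1 - 2 *: A).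
have detB : \det B = (- 2) ^+ k * \det A.
  have -> : B = block_mx 1%:M 0 (const_mx 1) 1%:M *m
                block_mx 1%:M (const_mx 1) 0 (- 2 *: A).
    rewrite mulmx_block !(mul1mx, mul0mx, mulmx1, addr0, add0r) scaleNr.
    by congr block_mx; congr (_ - _); apply/matrixP => i j; rewrite !mxE big_ord1 !mxE mulr1.
  by rewrite det_mulmx det_lblock det_ublock !det1 !mul1r detZ.
have B_sign i j : B i j ^+ 2 = 1.
  case: (split_ordP i) => i' ->; case: (split_ordP j) => j' ->.
  - by rewrite block_mxEul !ord1 mxE eqxx expr1n.
  - by rewrite block_mxEur mxE expr1n.
  - by rewrite block_mxEdl mxE expr1n.
  - by rewrite block_mxEdr !mxE; case: (A01 i' j') => ->; ring.
have rowB i : row_dot B i i = (1 + k)%:R.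
  rewrite /row_dot (eq_bigr (fun=> 1)) ?sumr_const ?card_ord // => l _.
  by rewrite -expr2 B_sign.
have := hadamard B.
rewrite detB (eq_bigr _ (fun i _ => rowB i)) prodr_const card_ord add1n.
by rewrite !exprMn -!exprM mulnC !exprM sqrrN.
Qed.
End Hadamard.

Lemma inImage_diag k (d : seq int) (v : 'cV[int]_k) :
  (forall l : 'I_k, (d`_l %| v l ord0)%Z) ->
  inImage (\matrix_(i, j) (d`_i *+ (i == j :> nat)) : 'M_k) v.
Proof.
move=> dvd_v; exists (\col_l (v l ord0 %/ d`_l)%Z).
apply/matrixP => l z; rewrite ord1 mxE (bigD1 l) //= big1 ?addr0 => [|l' /negPf].
  by rewrite !mxE eqxx mulr1n mulrC divzK.
by rewrite mxE eq_sym val_eqE => ->; rewrite mul0r.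
Qed.

Lemma inImage_unitmx_mul k (L D R : 'M[int]_k) y :
  L \in unitmx -> R \in unitmx -> inImage D (invmx L *m y) -> inImage (L *m D *m R) y.
Proof.
move=> uL uR [x ex]; exists (invmx R *m x).
by rewrite -!mulmxA mulKVmx // -ex mulKVmx.
Qed.

Lemma abs_det_unitmx k (L : 'M[int]_k) : L \in unitmx -> `|\det L| = 1.
Proof. by rewrite unitmxE => /orP [] /eqP ->. Qed.

Lemma card_incongruent_le_det k (A : 'M[int]_k) N (u : 'I_N -> 'cV[int]_k) :
  \det A != 0 -> (forall i j, inImage A (u i - u j) -> i = j) -> N%:Z <= `|\det A|.
Proof.
move=> detA_neq0 u_incongr.
have [L L_unit [R R_unit [d _ defA]]] := int_Smith_normal_form A.
set D := \matrix_(i, j) _ in defA.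
have detD : \det D = \prod_(l < k) d`_l.
  rewrite det_trig; first by apply: eq_bigr => l _; rewrite mxE eqxx mulr1n.
  by apply/is_trig_mxP => i j ij; rewrite mxE ltn_eqF.
have detA : `|\det A| = \prod_(l < k) `|d`_l|.
  rewrite defA !det_mulmx !normrM (abs_det_unitmx L_unit) (abs_det_unitmx R_unit).
  by rewrite mul1r mulr1 detD normr_prod.
have d_neq0 (l : 'I_k) : d`_l != 0.
  move: detA_neq0; rewrite defA !det_mulmx detD !mulf_eq0 negb_or => /andP [/norP [_]].
  by rewrite prodf_seq_eq0 => /hasPn /(_ l (mem_index_enum _)).
pose v i := invmx L *m u i.
pose e (l : 'I_k) := absz d`_l; pose r i l := absz (modz (v i l ord0) d`_l).
have res_lt i (l : 'I_k) : (r i l < e l)%N.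
  by rewrite -ltz_nat !abszE (ger0_norm (modz_ge0 _ (d_neq0 l))); exact: ltz_mod.
pose res i : {dffun forall l : 'I_k, 'I_(e l)} := [ffun l => Ordinal (res_lt i l)].
have res_inj : injective res.
  move=> i j /ffunP eq_res; apply: u_incongr; rewrite defA.
  apply: inImage_unitmx_mul => //; rewrite mulmxBr; apply: inImage_diag => l.
  have -> : (v i - v j) l ord0 = v i l ord0 - v j l ord0 by rewrite !mxE.
  rewrite -eqz_mod_dvd; apply/eqP.
  have := eq_res l; rewrite !ffunE => /(congr1 val) /= /(congr1 Posz).
  by rewrite !abszE !ger0_norm ?modz_ge0.
have := leq_card res res_inj.
rewrite card_ord card_dep_ffun foldrE big_map big_enum /= -lez_nat => /le_trans; apply.
rewrite detA (big_morph Posz PoszM (erefl _)).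
by under eq_bigr do rewrite card_ord abszE.
Qed.

Lemma inSatB m n (T : 'M[int]_(m, n)) z1 z2 :
  inSat T z1 -> inSat T z2 -> inSat T (z1 - z2).
Proof.
move=> [q1 [q1_neq0 [y1 def1]]] [q2 [q2_neq0 [y2 def2]]].
exists (q1 * q2); split; first by rewrite mulf_neq0.
exists (q2 *: y1 - q1 *: y2).
by rewrite mulmxBr -!scalemxAr -def1 -def2 scalerBr !scalerA [q2 * q1]mulrC.
Qed.

Section MaximalMinor.
Variables (m n : nat) (T : 'M[int]_(m, n)).

Let TQ := map_mx (fun x : int => (x%:~R : rat)) T.
Let rsel := maxrankfun TQ.

Lemma maxrowsub_tr_full : row_full (rowsub rsel TQ)^T.
Proof. by rewrite /row_full mxrank_tr; exact: maxrowsub_free. Qed.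

Let csel := fullrankfun maxrowsub_tr_full.
Let A := mxsub rsel csel T.

Lemma det_maxminor_neq0 : \det A != 0.
Proof.
have : mxsub rsel csel TQ \in unitmx.
  rewrite -unitmx_tr (_ : _^T = rowsub csel (rowsub rsel TQ)^T) ?fullrowsub_unit //.
  by apply/matrixP => i j; rewrite !mxE.
by rewrite -map_mxsub unitmxE unitfE det_map_mx intr_eq0.
Qed.

Lemma maxminor_kernel (v : 'cV[int]_n) : rowsub rsel (T *m v) = 0 -> T *m v = 0.
Proof.
move=> Tv0; have /submxP [D defTQ] : (TQ <= rowsub rsel TQ)%MS by rewrite eq_maxrowsub.
have : map_mx intr (T *m v) = 0 :> 'cV[rat]_m.
  rewrite map_mxM -/TQ defTQ -mulmxA mul_rowsub_mx -map_mxM -map_mxsub Tv0.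
  by rewrite map_mx0 mulmx0.
move/matrixP => Tv0Q; apply/matrixP => i j.
by move: (Tv0Q i j); rewrite !mxE => /eqP; rewrite intr_eq0 => /eqP.
Qed.

Lemma inImage_of_maxminor z (x : 'cV[int]_(\rank TQ)) :
  inSat T z -> rowsub rsel z = A *m x -> inImage T z.
Proof.
move=> [q [q_neq0 [y qz]]] zx; pose x' := colsub csel 1%:M *m x.
have Ax' : rowsub rsel (T *m x') = A *m x.
  by rewrite mulmxA mulmx_colsub mulmx1 -mul_rowsub_mx -mxsubrc.
exists x'; apply/eqP; rewrite -subr_eq0; apply/eqP.
pose w := z - T *m x'.
have w_rows0 : rowsub rsel w = 0 by rewrite rowsubE mulmxBr -!rowsubE zx Ax' subrr.
have qw : q *: w = T *m (y - q *: x') by rewrite scalerBr qz mulmxBr -scalemxAr.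
have : T *m (y - q *: x') = 0.
  by apply: maxminor_kernel; rewrite -qw rowsubE -scalemxAr -rowsubE w_rows0 scaler0.
by rewrite -qw => /eqP; rewrite scalemx_eq0 (negPf q_neq0) => /eqP.
Qed.

Lemma exists_nonsingular_minor :
  exists r : 'I_(rankY T) -> 'I_m, exists c : 'I_(rankY T) -> 'I_n,
  \det (mxsub r c T) != 0 /\
  forall z x, inSat T z -> rowsub r z = mxsub r c T *m x -> inImage T z.
Proof.
by exists rsel, csel; split; [exact: det_maxminor_neq0 | exact: inImage_of_maxminor].
Qed.
End MaximalMinor.

Lemma le_bound (R : realType) k (z : int) :
  (2 ^+ k * z%:~R) ^+ 2 <= (k.+1)%:R ^+ k.+1 :> R -> `|z| <= bound R k.
Proof.
move=> hz; rewrite /bound floor_ge_int intr_norm ler_pdivlMl ?exprn_gt0 //.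
rewrite -[2 ^+ k]ger0_norm ?exprn_ge0 // -normrM -sqrtr_sqr ler_sqrt //.
by rewrite exprn_ge0.
Qed.

Unset Implicit Arguments.

Theorem lemma2p14 (R : realType) (m n : nat) (T : 'M[int]_(m, n))
  (hT : forall i j, T i j = 0 \/ T i j = 1)
  (N : nat) (f : 'I_N -> 'cV[int]_m)
  (hZ : forall i, inSat T (f i))
  (hdist : forall i j, inImage T (f i - f j) -> i = j) :
  (N%:Z <= bound R (rankY T))%R.
Proof.
have [r [c [detA_neq0 minor_lifts]]] := exists_nonsingular_minor T.
set A := mxsub r c T in detA_neq0 minor_lifts.
have N_le_det : N%:Z <= `|\det A|.
  apply: (card_incongruent_le_det (u := fun i => rowsub r (f i))) detA_neq0 _ => i j [x ex].
  apply: hdist; apply: (minor_lifts _ x (inSatB (hZ i) (hZ j))).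
  by rewrite rowsubE mulmxBr -!rowsubE.
apply: le_trans N_le_det (le_bound _).
have := hadamard01 (A := map_mx intr A : 'M[R]_(rankY T)).
rewrite det_map_mx; apply => i j; rewrite !mxE.
by have [->|->] := hT (r i) (c j); [left | right].
Qed.
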